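(* Let $a_1,\ldots,a_k$ be positive integers, $A=\sum_{j=1}^k a_j$, $n=k+2$, and $v=[4A+2;\,8a_1,\ldots,8a_k,\,1,\,1]$ (players $1,\ldots,n$). Let $v_{\&\{n-1,n\}}$ be the game in which player $n$ annexes player $n-1$, i.e. they are replaced by one player $\&\{n-1,n\}$ of weight $2$. Then $\beta_{\&\{n-1,n\}}(v_{\&\{n-1,n\}})>\beta_n(v)$ if and only if there is a set $P\subseteq\{1,\ldots,k\}$ with $\sum_{j\in P}a_j=\sum_{j\notin P}a_j$.
   Context: A weighted voting game $[q;w_1,\ldots,w_n]$ has players $1,\ldots,n$ with nonnegative weights $w_j$ and quota $q$, $0<q\le\sum_jw_j$; a coalition $S$ is winning iff $\sum_{j\in S}w_j\ge q$. Player $j$ is critical in $S$ if $S$ is winning and $S\setminus\{j\}$ is losing; $\eta_j$ is the number of coalitions in which $j$ is critical, and the Banzhaf index is $\beta_j=\eta_j/\sum_k\eta_k$. Merging a set $T$ of players yields the WVG with the same quota in which the players of $T$ are replaced by a single player $\&T$ of weight $\sum_{j\in T}w_j$. *)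

From HB Require Import structures.
From mathcomp Require Import all_boot all_order all_algebra.
Set Implicit Arguments. Unset Strict Implicit. Unset Printing Implicit Defensive.
Import Order.TTheory GRing.Theory Num.Theory.

Definition winning (n : nat) (q : nat) (w : 'I_n -> nat) (S : {set 'I_n}) : bool :=
  q <= \sum_(j in S) w j.

Definition critical (n : nat) (q : nat) (w : 'I_n -> nat) (j : 'I_n)
    (S : {set 'I_n}) : bool :=
  winning q w S && ~~ winning q w (S :\ j).

Definition eta (n : nat) (q : nat) (w : 'I_n -> nat) (j : 'I_n) : nat :=
  #|[set S : {set 'I_n} | critical q w j S]|.

Definition banzhaf (n : nat) (q : nat) (w : 'I_n -> nat) (j : 'I_n) : rat :=
  ((eta q w j)%:R / (\sum_(k < n) eta q w k)%:R)%R.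

(* Merging the last two players (n-1 and n, i.e. indices m and m+1 of 'I_(m+2))
   into a single player of weight w(n-1) + w(n), placed at index m of 'I_(m+1);
   the other players keep their weights (quota unchanged). *)
Definition merge_last2 (m : nat) (w : 'I_m.+2 -> nat) : 'I_m.+1 -> nat :=
  fun i => if unlift ord_max i is Some j
           then w (widen_ord (leqnSn _) (widen_ord (leqnSn _) j))
           else w (inord m) + w ord_max.

(* The game v = [4A+2; 8a_1,...,8a_k, 1, 1] on players 'I_(k+2). *)
Definition vweights (k : nat) (a : 'I_k -> nat) : 'I_k.+2 -> nat :=
  fun i => if (insub (val i) : option 'I_k) is Some j then 8 * a j else 1.

Definition vquota (k : nat) (a : 'I_k -> nat) : nat := 4 * (\sum_(j < k) a j) + 2.

From mathcomp Require Import all_boot all_order all_algebra zify.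
Import Order.TTheory GRing.Theory Num.Theory.

(* Let v' be the game obtained from a weighted voting game v on players
   0..m+1 by merging the last two players m, m+1 into one player &.
   1. Collapsing m+1 onto m maps players of v onto players of v'; the
      preimage S |-> collapse^-1(S) is an injective, weight-preserving map
      from coalitions of v' to coalitions of v, sending each critical
      coalition of a small player j < m to a critical coalition of j in v.
      Hence eta_j(v') <= eta_j(v).
   2. If the two merged players have weight 1 and all other weights and the
      quota are even, then by parity & is critical in S iff player m+1 is
      critical in collapse^-1(S), every coalition where m+1 is critical has
      this form, and player m is then critical as well.  So
      eta_&(v') = eta_{m+1}(v), and the total swing count strictly drops
      when eta_& > 0.
   3. For v = [4A+2; 8a_1..8a_k, 1, 1], & is critical in some coalition iff
      the a_j can be split into two halves of equal sum.
   With N = eta_& = eta_{m+1}, the theorem compares N/D' with N/D, D' < D,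
   which holds exactly when N > 0, i.e. when the partition exists. *)

Set Implicit Arguments. Unset Strict Implicit. Unset Printing Implicit Defensive.

Lemma criticalE n q (w : 'I_n -> nat) j S :
  critical q w j S =
  [&& j \in S, q <= \sum_(i in S) w i & \sum_(i in S) w i < q + w j].
Proof.
rewrite /critical /winning.
have [jS|jNS] := boolP (j \in S); last first.
  have -> : S :\ j = S.
    by apply/setP=> i; rewrite !inE; case: eqP => // ->; rewrite (negbTE jNS).
  by rewrite andbN.
rewrite (big_setD1 j jS) /= -ltnNge; case: (q <= _) => //=.
by rewrite addnC ltn_add2r.
Qed.

Lemma critical_mem n q (w : 'I_n -> nat) j S : critical q w j S -> j \in S.
Proof. by rewrite criticalE => /and3P[]. Qed.

Lemma widen_inj n : injective (widen_ord (leqnSn n)).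
Proof. by move=> i j eq_ij; apply: val_inj; exact: (congr1 val eq_ij). Qed.

Lemma sum_setC (T : finType) (f : T -> nat) (P : {set T}) :
  \sum_i f i = \sum_(i in P) f i + \sum_(i in ~: P) f i.
Proof.
rewrite (bigID (mem P)) /=; congr (_ + _); apply: eq_bigl => i; by rewrite ?inE.
Qed.

Section Merge.

Variables (m q : nat) (w : 'I_m.+2 -> nat).

Local Notation w' := (merge_last2 w).
Local Notation widen := (widen_ord (leqnSn _)).

Definition collapse (i : 'I_m.+2) : 'I_m.+1 := inord (minn i m).

Definition unmerge (S : {set 'I_m.+1}) : {set 'I_m.+2} := collapse @^-1: S.

Lemma mem_unmerge S i : (i \in unmerge S) = (collapse i \in S).
Proof. by rewrite inE. Qed.

Lemma collapse_widen (j : 'I_m.+1) : collapse (widen j) = j.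
Proof.
apply: val_inj; rewrite /= inordK ?ltnS ?geq_minr //.
by have := ltn_ord j; rewrite /=; lia.
Qed.

Lemma collapse_max : collapse ord_max = ord_max.
Proof. by apply: val_inj; rewrite /= inordK ?ltnS ?geq_minr //; apply/minn_idPr. Qed.

Lemma widen_max : widen (ord_max : 'I_m.+1) = inord m.
Proof. by apply: val_inj; rewrite /= inordK. Qed.

Lemma collapse_pen : collapse (inord m) = ord_max.
Proof. by rewrite -widen_max collapse_widen. Qed.

Lemma merge_small (j : 'I_m) : w' (widen j) = w (widen (widen j)).
Proof.
have -> : w' (widen j) = w' (lift ord_max j).
  by congr w'; apply: val_inj; rewrite /= /bump leqNgt ltn_ord.
by rewrite /merge_last2 liftK.
Qed.

Lemma merge_max : w' ord_max = w (inord m) + w ord_max.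
Proof. by rewrite /merge_last2 unlift_none. Qed.

Lemma weight_unmerge S :
  \sum_(i in unmerge S) w i = \sum_(i in S) w' i.
Proof.
rewrite [LHS]big_mkcond [RHS]big_mkcond !big_ord_recr /= merge_max.
rewrite !mem_unmerge collapse_max collapse_widen -widen_max -addnA.
congr (_ + _); last by case: (_ \in S).
by apply: eq_bigr => j _; rewrite mem_unmerge collapse_widen merge_small.
Qed.

Lemma unmerge_inj : injective unmerge.
Proof.
move=> S1 S2 eqS; apply/setP=> j.
by rewrite -[j]collapse_widen -!mem_unmerge eqS.
Qed.

Lemma critical_small_unmerge (j : 'I_m) S :
  critical q w' (widen j) S -> critical q w (widen (widen j)) (unmerge S).
Proof.
by rewrite !criticalE weight_unmerge mem_unmerge collapse_widen merge_small.
Qed.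

Lemma eta_small_le (j : 'I_m) : eta q w' (widen j) <= eta q w (widen (widen j)).
Proof.
rewrite /eta -(card_imset _ unmerge_inj); apply: subset_leq_card.
apply/subsetP=> _ /imsetP[S + ->]; rewrite !inE; exact: critical_small_unmerge.
Qed.

Hypothesis w_pen : w (inord m) = 1.
Hypothesis w_last : w ord_max = 1.
Hypothesis even_small : forall j : 'I_m, 2 %| w (widen (widen j)).
Hypothesis even_quota : 2 %| q.

Definition small_weight (T : {set 'I_m.+2}) : nat :=
  \sum_(j < m | widen (widen j) \in T) w (widen (widen j)).

Lemma weight_split (T : {set 'I_m.+2}) :
  \sum_(i in T) w i = small_weight T + (inord m \in T) + (ord_max \in T).
Proof.
rewrite big_mkcond !big_ord_recr /= -big_mkcond widen_max w_pen w_last.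
by case: (_ \in T); case: (_ \in T).
Qed.

Lemma even_small_weight (T : {set 'I_m.+2}) : 2 %| small_weight T.
Proof. by apply: dvdn_sum => j _; apply: even_small. Qed.

(* Where the last player is critical, the weight hits the quota exactly,
   so by parity the other unit-weight player is present too. *)
Lemma critical_last_pen (T : {set 'I_m.+2}) : critical q w ord_max T -> inord m \in T.
Proof.
rewrite criticalE weight_split w_last => /and3P[-> ] /=.
by case: (inord m \in T) => //=; have := even_small_weight T; lia.
Qed.

Lemma critical_pen_of_last (T : {set 'I_m.+2}) :
  critical q w ord_max T -> critical q w (inord m) T.
Proof.
move=> cT; have := cT.
by rewrite !criticalE w_pen w_last (critical_last_pen cT) => /and3P[_ -> ->].
Qed.

(* The merged player is critical in S iff the last player is critical in
   the corresponding coalition of v: no coalition containing both unit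
   players has odd weight q + 1. *)
Lemma critical_merged_unmerge S :
  critical q w' ord_max S = critical q w ord_max (unmerge S).
Proof.
rewrite !criticalE -weight_unmerge merge_max w_pen w_last mem_unmerge collapse_max.
case: (ord_max \in S) / idP => //= inS.
rewrite weight_split !mem_unmerge collapse_max collapse_pen.
by case: (ord_max \in S) inS => // _; have := even_small_weight (unmerge S); lia.
Qed.

Lemma widen_collapse (i : 'I_m.+2) : i <= m -> widen (collapse i) = i.
Proof. by move=> le_im; apply: val_inj; rewrite /= inordK; lia. Qed.

Lemma unmerge_saturated (T : {set 'I_m.+2}) :
  (inord m \in T) = (ord_max \in T) -> unmerge [set j | widen j \in T] = T.
Proof.
move=> eqT; apply/setP=> i; rewrite mem_unmerge inE.
have [/widen_collapse -> //|lt_mi] := leqP i m.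
have -> : i = ord_max by apply: val_inj; have := ltn_ord i; rewrite /=; lia.
by rewrite collapse_max widen_max.
Qed.

Lemma eta_merged_eq : eta q w' ord_max = eta q w ord_max.
Proof.
rewrite /eta -(card_imset _ unmerge_inj); congr #|pred_of_set _|.
apply/setP=> T; rewrite inE; apply/imsetP/idP => [[S + ->]|cT].
  by rewrite inE critical_merged_unmerge.
have eqT : unmerge [set j | widen j \in T] = T.
  by apply: unmerge_saturated; rewrite (critical_last_pen cT) (critical_mem cT).
by exists [set j | widen j \in T]; rewrite // inE critical_merged_unmerge eqT.
Qed.

(* Once the merged player swings somewhere, merging strictly lowers the
   total number of swings: small players lose swings, the merged player
   inherits exactly those of m+1, and those of m (at least one) vanish. *)
Lemma total_eta_lt :
  0 < eta q w' ord_max ->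
  \sum_(i < m.+1) eta q w' i < \sum_(i < m.+2) eta q w i.
Proof.
move=> /card_gt0P[S]; rewrite inE critical_merged_unmerge => cS.
have pen_pos : 0 < eta q w (inord m).
  by apply/card_gt0P; exists (unmerge S); rewrite inE critical_pen_of_last.
rewrite !big_ord_recr /= eta_merged_eq widen_max ltn_add2r -addn1.
by rewrite leq_add // leq_sum // => j _; apply: eta_small_le.
Qed.

End Merge.

Lemma ratio_lt_iff (N D' D : nat) :
  N <= D' -> (0 < N -> D' < D) ->
  ((N%:R / D%:R : rat) < N%:R / D'%:R)%R = (0 < N).
Proof.
move=> le_ND' lt_D'D; have [->|N_pos] := posnP N; first by rewrite !mul0r ltxx.
have {}lt_D'D := lt_D'D N_pos.
have D'_pos : 0 < D' by apply: leq_trans le_ND'.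
have D_pos : 0 < D by apply: leq_trans lt_D'D.
by rewrite ltr_pM2l ?ltr0n // ltf_pV2 ?posrE ?ltr0n // ltr_nat.
Qed.

Section PartitionGame.

Variables (k : nat) (a : 'I_k -> nat).

Local Notation widen := (widen_ord (leqnSn _)).
Local Notation v := (vweights a).
Local Notation q := (vquota a).

Lemma vweights_small (j : 'I_k) : v (widen (widen j)) = 8 * a j.
Proof. by rewrite /vweights valK. Qed.

Lemma vweights_unit (i : 'I_k.+2) : k <= i -> v i = 1.
Proof. by move=> le_ki; rewrite /vweights insubN // -leqNgt. Qed.

Lemma vweights_even (j : 'I_k) : 2 %| v (widen (widen j)).
Proof. by rewrite vweights_small dvdn_mulr. Qed.

Lemma vquota_even : 2 %| q.
Proof. by rewrite /vquota dvdn_addl // dvdn_mulr. Qed.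

Lemma vweights_pen : v (inord k) = 1.
Proof. by rewrite vweights_unit // inordK. Qed.

Lemma vweights_last : v ord_max = 1.
Proof. exact: vweights_unit. Qed.

Lemma merged_weight (S : {set 'I_k.+1}) :
  \sum_(i in S) merge_last2 v i =
  8 * \sum_(j in [set j : 'I_k | widen j \in S]) a j + 2 * (ord_max \in S).
Proof.
rewrite big_mkcond big_ord_recr /= merge_max vweights_pen vweights_last.
rewrite big_distrr [in RHS]big_mkcond /=; congr (_ + _); last by case: (_ \in S).
by apply: eq_bigr => j _; rewrite inE merge_small vweights_small; case: (_ \in S).
Qed.

(* The window condition for the merged player when the quota is 4(x+y)+2
   and the small players in the coalition have a-weight x. *)
Lemma halves_window (x y : nat) :
  (4 * (x + y) + 2 <= 8 * x + 2 * 1) && (8 * x + 2 * 1 < 4 * (x + y) + 2 + (1 + 1))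
  = (x == y).
Proof. lia. Qed.

Lemma merged_pivotal_iff_partition :
  0 < eta q (merge_last2 v) ord_max <->
  exists P : {set 'I_k}, \sum_(j in P) a j = \sum_(j in ~: P) a j.
Proof.
split=> [/card_gt0P[S]|[P halves]].
  rewrite inE criticalE merged_weight merge_max vweights_pen vweights_last.
  case/and3P=> ->; rewrite /vquota (sum_setC a [set j | widen j \in S]) => lo hi.
  by exists [set j | widen j \in S]; apply/eqP; rewrite -halves_window lo hi.
pose S := ord_max |: [set widen j | j in P].
have PS : [set j : 'I_k | widen j \in S] = P.
  apply/setP=> j; rewrite !inE (mem_imset _ _ (@widen_inj k)).
  by rewrite -val_eqE /= ltn_eqF.
apply/card_gt0P; exists S; rewrite inE criticalE merged_weight PS.
rewrite merge_max vweights_pen vweights_last setU11 /vquota (sum_setC a P) halves.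
by rewrite halves_window eqxx.
Qed.

End PartitionGame.

Unset Implicit Arguments.

Theorem mainTheorem9 (k : nat) (a : 'I_k -> nat) (apos : forall j, 0 < a j) :
  (banzhaf (vquota a) (merge_last2 (vweights a)) ord_max
     > banzhaf (vquota a) (vweights a) ord_max)%R
  <->
  exists P : {set 'I_k}, \sum_(j in P) a j = \sum_(j in ~: P) a j.
Proof.
have eq_eta := eta_merged_eq (@vweights_pen k a) (@vweights_last k a)
  (@vweights_even k a) (@vquota_even k a).
have lt_total := total_eta_lt (@vweights_pen k a) (@vweights_last k a)
  (@vweights_even k a) (@vquota_even k a).
rewrite -merged_pivotal_iff_partition /banzhaf -eq_eta ratio_lt_iff //.
by rewrite big_ord_recr leq_addl.
Qed.
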